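(* The structure $\mathbb{M}_0=(\{0,1,2\};\psi_2,\rho_2,\{0,1\},\{0\},\{1\},\{2\})$ pp-constructs $\mathbb{M}_0'=(\{0,1,2\};\psi_2,\rho_2,\tau_0,\tau_1,\{0,1\},\{0\},\{1\},\{2\})$, and $\mathbb{M}_0'$ pp-constructs $\mathbb{M}_0$.
   Context: $\psi_2=\{(0,1),(1,0),(2,2)\}$; $\mu_2$ is the equivalence relation on $\{0,1,2\}$ with classes $\{0,1\},\{2\}$ and $\rho_2=\{0,1,2\}^2\setminus\mu_2$; $\tau_0=\{(0,0),(1,0),(2,1)\}$; $\tau_1=\{(0,1),(1,1),(2,0)\}$. A relation is pp-definable in $\mathbb{A}$ if definable by a formula using the relations of $\mathbb{A}$, equality, conjunction and existential quantification. A pp-power of $\mathbb{A}$ is a structure isomorphic to one with domain $A^n$ whose $k$-ary relations, viewed as $kn$-ary relations on $A$, are pp-definable in $\mathbb{A}$. $\mathbb{A}$ pp-constructs $\mathbb{B}$ if $\mathbb{B}$ is homomorphically equivalent (homomorphisms in both directions) to a pp-power of $\mathbb{A}$. *)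

From mathcomp Require Import all_boot.
Set Implicit Arguments. Unset Strict Implicit. Unset Printing Implicit Defensive.

(* A relation of arity [ar] on A: a predicate on tuples, encoded as lists;
   only lists of length [ar] are ever considered. *)
Record relation (A : Type) := Rel { ar : nat; rl : seq A -> Prop }.

Definition rel_dflt (A : Type) : relation A := @Rel A 0 (fun _ => False).

Record structure := Struct { carrier : Type; rels : seq (relation carrier) }.

Definition nth_rel (M : structure) (i : nat) : relation (carrier M) :=
  nth (@rel_dflt _) (rels M) i.

Definition hom (M N : structure) (f : carrier M -> carrier N) : Prop :=
  map (@ar _) (rels M) = map (@ar _) (rels N) /\
  forall i, i < size (rels M) ->
    forall t : seq (carrier M), size t = ar (nth_rel M i) ->
      rl (nth_rel M i) t -> rl (nth_rel N i) (map f t).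

Definition hom_equiv (M N : structure) : Prop :=
  (exists f, @hom M N f) /\ (exists g, @hom N M g).

Inductive ppformula :=
| PAtom of nat & seq nat      (* R_i(x_{v1},...,x_{vk}) *)
| PEq of nat & nat
| PAnd of ppformula & ppformula
| PEx of nat & ppformula.

Definition upd (A : Type) (env : nat -> A) (x : nat) (a : A) : nat -> A :=
  fun y => if y == x then a else env y.

Fixpoint sat (M : structure) (env : nat -> carrier M) (phi : ppformula) : Prop :=
  match phi with
  | PAtom i vs => i < size (rels M) /\ size vs = ar (nth_rel M i) /\
                  rl (nth_rel M i) (map env vs)
  | PEq x y => env x = env y
  | PAnd p q => sat env p /\ sat env q
  | PEx x p => exists a, sat (upd env x a) p
  end.

Definition pp_definable (M : structure) (k : nat) (S : seq (carrier M) -> Prop) : Prop :=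
  exists phi : ppformula, forall env : nat -> carrier M,
    S (mkseq env k) <-> sat env phi.

(* The j-th block of n consecutive variables, as an element of A^n. *)
Definition blk (A : Type) (n : nat) (env : nat -> A) (j : nat) : 'I_n -> A :=
  fun i => env (j * n + i).

(* A k-ary relation on A^n, viewed as a kn-ary relation on A, is pp-definable. *)
Definition pp_definable_power (M : structure) (n : nat)
    (R : relation ('I_n -> carrier M)) : Prop :=
  exists phi : ppformula, forall env : nat -> carrier M,
    rl R (mkseq (@blk _ n env) (ar R)) <-> sat env phi.

(* M pp-constructs N: N is homomorphically equivalent to a pp-power of M
   (isomorphic copies are absorbed by homomorphic equivalence). *)
Definition pp_constructs (M N : structure) : Prop :=
  exists (n : nat) (C : seq (relation ('I_n -> carrier M))),
    0 < n /\ (forall i, i < size C -> @pp_definable_power M n (nth (@rel_dflt _) C i)) /\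
    hom_equiv (@Struct ('I_n -> carrier M) C) N.

Definition D3 := 'I_3.
Definition vals (t : seq D3) : seq nat := map (@nat_of_ord 3) t.

Definition psi2 : relation D3 :=
  Rel 2 (fun t => vals t = [:: 0; 1] \/ vals t = [:: 1; 0] \/ vals t = [:: 2; 2]).
Definition mu2 (a b : nat) : Prop := (a < 2) = (b < 2).
Definition rho2 : relation D3 :=
  Rel 2 (fun t => exists a b : D3, t = [:: a; b] /\ ~ mu2 a b).
Definition tau0 : relation D3 :=
  Rel 2 (fun t => vals t = [:: 0; 0] \/ vals t = [:: 1; 0] \/ vals t = [:: 2; 1]).
Definition tau1 : relation D3 :=
  Rel 2 (fun t => vals t = [:: 0; 1] \/ vals t = [:: 1; 1] \/ vals t = [:: 2; 0]).
Definition unary (P : nat -> Prop) : relation D3 :=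
  Rel 1 (fun t => exists a : D3, t = [:: a] /\ P a).

Definition M0 : structure :=
  @Struct D3 [:: psi2; rho2; unary (fun a => a = 0 \/ a = 1);
                 unary (fun a => a = 0); unary (fun a => a = 1); unary (fun a => a = 2)].

Definition M0' : structure :=
  @Struct D3 [:: psi2; rho2; tau0; tau1; unary (fun a => a = 0 \/ a = 1);
                 unary (fun a => a = 0); unary (fun a => a = 1); unary (fun a => a = 2)].

From mathcomp Require Import all_boot.
Set Implicit Arguments. Unset Strict Implicit. Unset Printing Implicit Defensive.

(* M0 is the reduct of M0' that forgets tau0 and tau1, so M0' pp-constructs M0
   with one-dimensional points.  Conversely, tau0 and tau1 are the graphs of the
   mu2-class indicator [a = 2] and of its negation, and M0' is homomorphically
   equivalent to a three-dimensional pp-power of M0: a point (x, p, q) with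
   x in {0,1} stands for the bit [p = 2] /\ [q = 2] if x = 0 and [p = 2] \/ [q = 2]
   if x = 1, while (2, p, q) stands for 2.  The class indicators of p and q are what
   rho2 can talk about: psi2 becomes psi2(x, x') /\ rho2(p, q') /\ rho2(q, p'), which
   negates and swaps the two bits and so commutes with the decoding by De Morgan,
   and tau0, tau1 become mu2(x, p') (that is, rho2 o rho2) and rho2(x, p') on points
   (x', p', p') with x' in {0,1}.  The homomorphism conditions are finite and are
   checked by evaluating the defining pp-formulas over {0,1,2}. *)

Fixpoint free_vars (phi : ppformula) : seq nat :=
  match phi with
  | PAtom _ vs => vs
  | PEq x y => [:: x; y]
  | PAnd p q => free_vars p ++ free_vars q
  | PEx x p => [seq y <- free_vars p | y != x]
  end.

Lemma eq_in_sat (M : structure) (phi : ppformula) (e1 e2 : nat -> carrier M) :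
  {in free_vars phi, e1 =1 e2} -> sat e1 phi <-> sat e2 phi.
Proof.
elim: phi e1 e2 => [i vs|x y|p IHp q IHq|x p IHp] e1 e2 /= e12.
- by have /eq_in_map-> := e12.
- by rewrite !e12 // !inE eqxx ?orbT.
- have e12p : {in free_vars p, e1 =1 e2} by move=> y yp; rewrite e12 // mem_cat yp.
  have e12q : {in free_vars q, e1 =1 e2} by move=> y yq; rewrite e12 // mem_cat yq orbT.
  by split=> -[/(IHp _ _ e12p) sat_p /(IHq _ _ e12q) sat_q].
- have e12x a : sat (upd e1 x a) p <-> sat (upd e2 x a) p.
    apply: IHp => y yp; rewrite /upd; case: eqP => // /eqP y_x.
    by rewrite e12 // mem_filter y_x.
  by split=> -[a sat_a]; exists a; apply/e12x.
Qed.

Section Reducts.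

Variable M : structure.

Lemma pp_definable_nth_rel i :
  i < size (rels M) -> @pp_definable M (ar (nth_rel M i)) (rl (nth_rel M i)).
Proof.
move=> lt_i; exists (PAtom i (iota 0 (ar (nth_rel M i)))) => env /=.
by rewrite size_iota; split=> [|[_ []]].
Qed.

Lemma pp_constructs_of_pp_definable (rs : seq (relation (carrier M))) :
  (forall i, i < size rs ->
     @pp_definable M (ar (nth (@rel_dflt _) rs i)) (rl (nth (@rel_dflt _) rs i))) ->
  pp_constructs M (Struct rs).
Proof.
move=> rs_pp; pose lift (R : relation (carrier M)) :=
  Rel (ar R) (fun t : seq ('I_1 -> carrier M) => rl R [seq u ord0 | u <- t]).
exists 1, (map lift rs); split=> //; split.
  move=> i; rewrite size_map => lt_i; rewrite (nth_map (@rel_dflt _)) //.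
  have [phi phiP] := rs_pp i lt_i; exists phi => env /=.
  rewrite /mkseq -map_comp (eq_map (g := env)); first exact: phiP.
  by move=> j; rewrite /= /blk muln1 addn0.
split; [exists (fun u => u ord0) | exists (fun a _ => a)];
  (split; first by rewrite -map_comp); move=> i; rewrite ?size_map => lt_i t _;
  rewrite /nth_rel /= (nth_map (@rel_dflt _)) // => R_t.
by rewrite /= -map_comp map_id.
Qed.

Lemma pp_constructs_reduct (idx : seq nat) :
  all (fun i => i < size (rels M)) idx -> pp_constructs M (Struct (map (nth_rel M) idx)).
Proof.
move=> /allP idx_lt; apply: pp_constructs_of_pp_definable => i; rewrite size_map => lt_i.
rewrite (nth_map 0) //; apply/pp_definable_nth_rel/idx_lt/mem_nth/lt_i.
Qed.

End Reducts.

Section PPPowers.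

Variables (M : structure) (x0 : carrier M) (n : nat).

(* [Ordinal] rather than [inord], so that [vm_compute] can evaluate it. *)
Definition power_env (t : seq ('I_n.+1 -> carrier M)) (v : nat) : carrier M :=
  nth (fun=> x0) t (v %/ n.+1) (Ordinal (ltn_pmod v (ltn0Sn n))).

Lemma power_env_blk t j (i : 'I_n.+1) :
  power_env t (j * n.+1 + i) = nth (fun=> x0) t j i.
Proof.
rewrite /power_env divnMDl // divn_small // addn0; congr (nth _ t j _).
by apply: val_inj; rewrite /= modnMDl modn_small.
Qed.

Lemma power_env_mkseq_blk env k v :
  v < k * n.+1 -> power_env (mkseq (@blk _ n.+1 env) k) v = env v.
Proof. by move=> lt_v; rewrite /power_env nth_mkseq ?ltn_divLR // /blk /= -divn_eq. Qed.

Definition pp_power_rel (k : nat) (phi : ppformula) : relation ('I_n.+1 -> carrier M) :=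
  Rel k (fun t => sat (power_env t) phi).

Lemma pp_definable_power_rel k phi :
  all (fun v => v < k * n.+1) (free_vars phi) ->
  @pp_definable_power M n.+1 (pp_power_rel k phi).
Proof.
move=> /allP phi_vars; exists phi => env; apply: eq_in_sat => v /phi_vars.
exact: power_env_mkseq_blk.
Qed.

Definition pp_power (defs : seq (nat * ppformula)) : structure :=
  Struct [seq pp_power_rel d.1 d.2 | d <- defs].

Lemma pp_constructs_pp_power defs (N : structure) :
  all (fun d => all (fun v => v < d.1 * n.+1) (free_vars d.2)) defs ->
  hom_equiv (pp_power defs) N -> pp_constructs M N.
Proof.
move=> /(all_nthP (0, PEq 0 0)) defs_vars equiv.
exists n.+1, (rels (pp_power defs)); split=> //; split=> // i.
rewrite size_map => lt_i; rewrite (nth_map (0, PEq 0 0)) //.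
exact/pp_definable_power_rel/defs_vars.
Qed.

End PPPowers.

Definition decided_by (A : Type) (rs : seq (relation A)) (rbs : seq (pred (seq A))) :=
  forall i t, i < size rs -> size t = ar (nth (@rel_dflt A) rs i) ->
    reflect (rl (nth (@rel_dflt A) rs i) t) (nth xpred0 rbs i t).

Section FiniteDomain.

Variables (T : eqType) (dom : seq T).
Hypothesis dom_full : forall x, x \in dom.

Fixpoint words (m : nat) : seq (seq T) :=
  if m is m'.+1 then [seq x :: w | x <- dom, w <- words m'] else [:: [::]].

Lemma mem_words m w : size w = m -> w \in words m.
Proof. by move<-; elim: w => [|x w IHw] //=; apply: allpairs_f. Qed.

Variables (rs : seq (relation T)) (rbs : seq (pred (seq T))).
Hypothesis rsP : decided_by rs rbs.

Fixpoint eval_pp (env : nat -> T) (phi : ppformula) : bool :=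
  match phi with
  | PAtom i vs => [&& i < size rs, size vs == ar (nth (@rel_dflt T) rs i)
                    & nth xpred0 rbs i (map env vs)]
  | PEq x y => env x == env y
  | PAnd p q => eval_pp env p && eval_pp env q
  | PEx x p => has (fun a => eval_pp (upd env x a) p) dom
  end.

Lemma eval_ppP env phi : reflect (sat (M := Struct rs) env phi) (eval_pp env phi).
Proof.
elim: phi env => [i vs|x y|p IHp q IHq|x p IHp] env /=.
- case: ltnP => [lt_i|_]; last by constructor=> -[].
  case: eqP => [size_vs|size_vs]; last by constructor=> -[_ []].
  by apply: (iffP (rsP lt_i _)) => [||[_ []]]; rewrite ?size_map.
- exact: eqP.
- by apply: (iffP andP) => -[/IHp sat_p /IHq sat_q].
- apply: (iffP hasP) => [[a _ /IHp] | [a /IHp]]; first by exists a.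
  by exists a.
Qed.

End FiniteDomain.

Section PowerHomomorphisms.

Variables (T : eqType) (dom : seq T) (rs : seq (relation T)) (rbs : seq (pred (seq T))).
Hypotheses (dom_full : forall x, x \in dom) (rsP : decided_by rs rbs).
Variables (T' : eqType) (dom' : seq T') (rs' : seq (relation T')) (rbs' : seq (pred (seq T'))).
Hypotheses (dom'_full : forall x, x \in dom') (rs'P : decided_by rs' rbs').
Variables (x0 : T) (n : nat) (defs : seq (nat * ppformula)).
Hypothesis defs_ar : map fst defs = map (@ar _) rs'.

Local Notation d0 := (0, PEq 0 0).
Local Notation power := (pp_power (M := Struct rs) x0 n defs).

Definition hom_from_power_check (h : ('I_n.+1 -> T) -> T') : bool :=
  all (fun i => let: (k, phi) := nth d0 defs i in
         all (fun s => eval_pp dom rs rbs (nth x0 s) phi ==>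
                       nth xpred0 rbs' i (map h (mkseq (@blk _ n.+1 (nth x0 s)) k)))
             (words dom (k * n.+1)))
      (iota 0 (size defs)).

Definition hom_to_power_check (g : T' -> 'I_n.+1 -> T) : bool :=
  all (fun i => let: (k, phi) := nth d0 defs i in
         all (fun s => nth xpred0 rbs' i s ==>
                       eval_pp dom rs rbs (@power_env (Struct rs) x0 n (map g s)) phi)
             (words dom' k))
      (iota 0 (size defs)).

Lemma size_power_defs : size defs = size rs'.
Proof. by rewrite -(size_map fst) defs_ar size_map. Qed.

Lemma ar_nth_power_defs i : i < size defs -> ar (nth (@rel_dflt _) rs' i) = (nth d0 defs i).1.
Proof.
by move=> lt_i; rewrite -(nth_map _ 0) -?size_power_defs // -defs_ar (nth_map d0).
Qed.

Lemma map_ar_power : map (@ar _) (rels power) = map (@ar _) rs'.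
Proof. by rewrite -defs_ar -map_comp. Qed.

Lemma hom_from_power h :
  (forall u v, u =1 v -> h u = h v) ->
  all (fun d => all (fun v => v < d.1 * n.+1) (free_vars d.2)) defs ->
  hom_from_power_check h -> @hom power (Struct rs') h.
Proof.
move=> h_ext /(all_nthP d0) defs_vars /allP check; split; first exact: map_ar_power.
move=> i; rewrite size_map => lt_i t; rewrite /nth_rel /= (nth_map d0) //.
have lt_i' : i < size rs' by rewrite -size_power_defs.
have := check i; rewrite mem_iota lt_i => /(_ isT).
case: (nth d0 defs i) (ar_nth_power_defs lt_i) (defs_vars i lt_i) => k phi /= ar_i.
move=> /allP phi_vars /allP check_i size_t sat_t.
set s := mkseq (@power_env (Struct rs) x0 n t) (k * n.+1).
have t_blk : map h t = map h (mkseq (@blk _ n.+1 (nth x0 s)) k).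
  rewrite -{1}(mkseq_nth (fun=> x0) t) size_t /mkseq -!map_comp.
  apply/eq_in_map => j; rewrite mem_iota => /andP[_ lt_j]; apply: h_ext => u.
  rewrite /blk nth_mkseq ?power_env_blk //.
  by rewrite -ltn_divLR // divnMDl // divn_small // addn0.
apply/(rs'P lt_i'); first by rewrite size_map size_t ar_i.
rewrite t_blk; apply: (implyP (check_i s _)); first exact/(mem_words dom_full)/size_mkseq.
apply/(eval_ppP dom_full rsP); apply: (eq_in_sat _).1 sat_t => v /phi_vars lt_v.
by rewrite nth_mkseq.
Qed.

Lemma hom_to_power g : hom_to_power_check g -> @hom (Struct rs') power g.
Proof.
move=> /allP check; split=> [|i lt_i' t size_t R_t]; first by rewrite map_ar_power.
have lt_i : i < size defs by rewrite size_power_defs.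
rewrite /nth_rel /= (nth_map d0) //.
have := check i; rewrite mem_iota lt_i => /(_ isT).
case: (nth d0 defs i) (ar_nth_power_defs lt_i) => k phi /= ar_i /allP check_i.
apply/(eval_ppP dom_full rsP); apply: (implyP (check_i t _)).
  by apply: (mem_words dom'_full); rewrite size_t.
exact/(rs'P lt_i' size_t).
Qed.

End PowerHomomorphisms.

(* [inord] and [enum] do not reduce under [vm_compute], hence explicit ordinals. *)
Definition o0 : D3 := @Ordinal 3 0 isT.
Definition o1 : D3 := @Ordinal 3 1 isT.
Definition o2 : D3 := @Ordinal 3 2 isT.

Definition D3_enum : seq D3 := [:: o0; o1; o2].

Lemma mem_D3_enum (a : D3) : a \in D3_enum.
Proof. by case: a => [[|[|[|m]]] lt_m]. Qed.

Lemma mem_seq3P (T : eqType) (x a b c : T) :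
  reflect (x = a \/ x = b \/ x = c) (x \in [:: a; b; c]).
Proof.
rewrite !inE; apply: (iffP idP) => [|[|[]]->]; rewrite ?eqxx ?orbT //.
by case/or3P=> /eqP; tauto.
Qed.

Lemma lt2P (a : nat) : reflect (a = 0 \/ a = 1) (a < 2).
Proof. by case: a => [|[|a]]; constructor; [left|right|case]. Qed.

Definition unaryb (p : pred nat) (t : seq D3) : bool := if t is [:: a] then p a else false.

Lemma unaryP (P : nat -> Prop) (p : pred nat) t :
  (forall a, reflect (P a) (p a)) -> reflect (rl (unary P) t) (unaryb p t).
Proof.
move=> pP; case: t => [|a [|b t]] /=; try by constructor=> -[? []].
by apply: (iffP (pP a)) => [Pa|[_ [[->]]]] //; exists a.
Qed.

Definition rho2b (t : seq D3) : bool :=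
  if t is [:: a; b] then (a < 2) != (b < 2) else false.

Lemma rho2P t : reflect (rl rho2 t) (rho2b t).
Proof.
case: t => [|a [|b [|c t]]] /=; try by constructor=> -[? [? []]].
apply: (iffP idP) => [/eqP ne_ab|[_ [_ [[-> ->] /eqP //]]]].
by exists a, b.
Qed.

Definition vals_in (L : seq (seq nat)) (t : seq D3) : bool := vals t \in L.

Definition M0_tests : seq (pred (seq D3)) :=
  [:: vals_in [:: [:: 0; 1]; [:: 1; 0]; [:: 2; 2]]; rho2b;
      unaryb (fun a => a < 2); unaryb (fun a => a == 0); unaryb (fun a => a == 1);
      unaryb (fun a => a == 2)].

Definition M0'_tests : seq (pred (seq D3)) :=
  [:: vals_in [:: [:: 0; 1]; [:: 1; 0]; [:: 2; 2]]; rho2b;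
      vals_in [:: [:: 0; 0]; [:: 1; 0]; [:: 2; 1]]; vals_in [:: [:: 0; 1]; [:: 1; 1]; [:: 2; 0]];
      unaryb (fun a => a < 2); unaryb (fun a => a == 0); unaryb (fun a => a == 1);
      unaryb (fun a => a == 2)].

Lemma M0_decided : decided_by (rels M0) M0_tests.
Proof.
case=> [|[|[|[|[|[|i]]]]]] // t _ _.
- exact: mem_seq3P.
- exact: rho2P.
- by apply: unaryP => a; apply: lt2P.
all: by apply: unaryP => a; apply: eqP.
Qed.

Lemma M0'_decided : decided_by (rels M0') M0'_tests.
Proof.
case=> [|[|[|[|[|[|[|[|i]]]]]]]] // t _ _; try exact: mem_seq3P.
- exact: rho2P.
- by apply: unaryP => a; apply: lt2P.
all: by apply: unaryP => a; apply: eqP.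
Qed.

Definition cube_point (x p q : D3) : 'I_3 -> D3 := fun i => nth o0 [:: x; p; q] i.

Definition cube_encode (a : D3) : 'I_3 -> D3 :=
  match val a with
  | 0 => cube_point o0 o0 o0
  | 1 => cube_point o1 o2 o2
  | _ => cube_point o2 o0 o2
  end.

Definition cube_decode (u : 'I_3 -> D3) : D3 :=
  let p := u o1 == o2 in let q := u o2 == o2 in
  if u o0 == o2 then o2
  else if (if u o0 == o0 then p && q else p || q) then o1 else o0.

(* Point j is the block of variables 3j, 3j+1, 3j+2 read as (x, p, q); atoms 0-5
   are psi2, rho2, {0,1}, {0}, {1}, {2}. *)
Definition cube_defs : seq (nat * ppformula) :=
  [:: (2, PAnd (PAtom 0 [:: 0; 3]) (PAnd (PAtom 1 [:: 1; 5]) (PAtom 1 [:: 2; 4])));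
      (2, PAtom 1 [:: 0; 3]);
      (2, PAnd (PAtom 2 [:: 3]) (PAnd (PEq 4 5)
            (PEx 6 (PAnd (PAtom 1 [:: 0; 6]) (PAtom 1 [:: 6; 4])))));
      (2, PAnd (PAtom 2 [:: 3]) (PAnd (PEq 4 5) (PAtom 1 [:: 0; 4])));
      (1, PAnd (PAtom 2 [:: 0]) (PEq 1 2));
      (1, PAnd (PAtom 3 [:: 0]) (PAnd (PAtom 3 [:: 1]) (PAtom 3 [:: 2])));
      (1, PAnd (PAtom 4 [:: 0]) (PAnd (PAtom 5 [:: 1]) (PAtom 5 [:: 2])));
      (1, PAnd (PAtom 5 [:: 0]) (PAnd (PAtom 3 [:: 1]) (PAtom 5 [:: 2])))].

Local Notation cube := (pp_power (M := M0) o0 2 cube_defs).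

Lemma cube_decode_ext u v : u =1 v -> cube_decode u = cube_decode v.
Proof. by move=> uv; rewrite /cube_decode !uv. Qed.

Lemma cube_decode_hom : @hom cube M0' cube_decode.
Proof.
by apply: (hom_from_power mem_D3_enum M0_decided M0'_decided _ cube_decode_ext); vm_compute.
Qed.

Lemma cube_encode_hom : @hom M0' cube cube_encode.
Proof.
by apply: (hom_to_power mem_D3_enum M0_decided mem_D3_enum M0'_decided); vm_compute.
Qed.

Theorem lemma6p5 : pp_constructs M0 M0' /\ pp_constructs M0' M0.
Proof.
split.
- apply: (@pp_constructs_pp_power M0 o0 2 cube_defs) => //.
  by split; [exists cube_decode; exact: cube_decode_hom | exists cube_encode; exact: cube_encode_hom].
- exact: (pp_constructs_reduct (M := M0') (idx := [:: 0; 1; 4; 5; 6; 7])).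
Qed.
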